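(* Let $(y_1,z_1)$ be a nontrivial solution of $$\ddot y_1+3y_1+\tfrac32y_1^3+\tfrac92y_1z_1^2=0,\qquad \ddot z_1+9z_1+\tfrac92z_1^3+\tfrac{27}{2}z_1y_1^2=0.$$ Let $t_1<t_2$ be two consecutive critical points of $y_1(t)$. Then there exists $\tau\in(t_1,t_2)$ such that $z_1(\tau)=0$. *)

From Stdlib Require Import Reals.
From Coquelicot Require Import Coquelicot.
Open Scope R_scope.

Definition is_solution (y z : R -> R) : Prop :=
  forall t : R,
    ex_derive y t /\ ex_derive (Derive y) t /\
    ex_derive z t /\ ex_derive (Derive z) t /\
    Derive (Derive y) t + 3 * y t + 3 / 2 * y t ^ 3 + 9 / 2 * y t * z t ^ 2 = 0 /\
    Derive (Derive z) t + 9 * z t + 9 / 2 * z t ^ 3 + 27 / 2 * z t * y t ^ 2 = 0.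

Definition nontrivial (y z : R -> R) : Prop :=
  exists t : R, y t <> 0 \/ z t <> 0.

Definition critical_point (f : R -> R) (t : R) : Prop := Derive f t = 0.

Definition consecutive_critical_points (f : R -> R) (t1 t2 : R) : Prop :=
  t1 < t2 /\ critical_point f t1 /\ critical_point f t2 /\
  (forall t, t1 < t < t2 -> ~ critical_point f t).

(* Suppose z has no zero between the consecutive critical points t1 < t2 of y.
   Then y' and z keep constant signs a and b on (t1, t2).  The quantity
     W = y' z' + y z (3 + 3/2 y^2 + 3/2 z^2)
   satisfies W' = - y' z (6 + 9 y^2 + 3 z^2) along solutions, so a b W strictly
   decreases on [t1, t2].  At a critical point W = y z (3 + 3/2 y^2 + 3/2 z^2),
   and the equation y'' = - y (3 + 3/2 y^2 + 9/2 z^2) forces a y (t1) <= 0 and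
   a y (t2) >= 0 (y' leaves 0 with sign a at t1 and returns to 0 at t2), while
   b z >= 0 at both ends by continuity.  Hence a b W (t1) <= 0 <= a b W (t2),
   a contradiction. *)

From Stdlib Require Import Reals Lra Classical.
From Coquelicot Require Import Coquelicot.
Open Scope R_scope.

Lemma continuous_nonvanishing_sign (f : R -> R) t1 t2 :
  (forall t, continuous f t) -> t1 < t2 ->
  (forall t, t1 < t < t2 -> f t <> 0) ->
  exists s, forall t, t1 < t < t2 -> 0 < s * f t.
Proof.
  intros Hf Hlt Hnz.
  assert (Hc : continuity f) by (intro t; apply continuity_pt_filterlim, Hf).
  set (m := (t1 + t2) / 2).
  exists (f m); intros t Ht.
  destruct (Rlt_or_le 0 (f m * f t)) as [|Hle]; [assumption | exfalso].
  destruct (Rle_lt_dec m t) as [Hmt | Htm].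
  - destruct (IVT_cor f m t Hc Hmt Hle) as [c [Hc1 Hc2]].
    apply (Hnz c); [unfold m in *; lra | assumption].
  - rewrite Rmult_comm in Hle.
    destruct (IVT_cor f t m Hc (Rlt_le _ _ Htm) Hle) as [c [Hc1 Hc2]].
    apply (Hnz c); [unfold m in *; lra | assumption].
Qed.

Lemma continuous_nonneg_at_right (f : R -> R) x b :
  x < b -> continuous f x -> (forall t, x < t < b -> 0 < f t) -> 0 <= f x.
Proof.
  intros Hxb Hf Hpos.
  apply (filterlim_le (F := at_right x) (fun _ => 0) f 0 (f x)).
  - exists (mkposreal (b - x) ltac:(lra)); intros t Ht Hxt.
    apply Rlt_le, Hpos; split; [assumption|].
    apply Rabs_lt_between' in Ht; simpl in Ht; lra.
  - apply filterlim_const.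
  - apply (filterlim_filter_le_1 (F := locally x)); [|exact Hf].
    intros P [eps HP]; exists eps; intros t Ht _; exact (HP t Ht).
Qed.

Lemma continuous_nonneg_at_left (f : R -> R) a x :
  a < x -> continuous f x -> (forall t, a < t < x -> 0 < f t) -> 0 <= f x.
Proof.
  intros Hax Hf Hpos.
  apply (filterlim_le (F := at_left x) (fun _ => 0) f 0 (f x)).
  - exists (mkposreal (x - a) ltac:(lra)); intros t Ht Htx.
    apply Rlt_le, Hpos; split; [|assumption].
    apply Rabs_lt_between' in Ht; simpl in Ht; lra.
  - apply filterlim_const.
  - apply (filterlim_filter_le_1 (F := locally x)); [|exact Hf].
    intros P [eps HP]; exists eps; intros t Ht _; exact (HP t Ht).
Qed.

Lemma is_derive_nonneg_at_right (f : R -> R) x l b :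
  x < b -> is_derive f x l -> f x = 0 ->
  (forall t, x < t < b -> 0 < f t) -> 0 <= l.
Proof.
  intros Hxb Hd Hfx Hpos.
  apply is_derive_Reals in Hd.
  destruct (Rle_lt_dec 0 l) as [|Hl]; [assumption | exfalso].
  destruct (Hd (- l / 2)) as [d Hdiff]; [lra|].
  pose proof (cond_pos d) as Hd0.
  set (h := Rmin (d / 2) ((b - x) / 2)).
  assert (Hh1 : h <= d / 2) by apply Rmin_l.
  assert (Hh2 : h <= (b - x) / 2) by apply Rmin_r.
  assert (Hh : 0 < h) by (apply Rmin_pos; lra).
  specialize (Hdiff h ltac:(lra) ltac:(rewrite Rabs_pos_eq; lra)).
  rewrite Hfx in Hdiff; apply Rabs_def2 in Hdiff.
  specialize (Hpos (x + h) ltac:(lra)).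
  assert (E : (f (x + h) - 0) / h * h = f (x + h)) by (field; lra).
  nra.
Qed.

Lemma is_derive_nonpos_at_left (f : R -> R) a x l :
  a < x -> is_derive f x l -> f x = 0 ->
  (forall t, a < t < x -> 0 < f t) -> l <= 0.
Proof.
  intros Hax Hd Hfx Hpos.
  enough (0 <= - l) by lra.
  apply (is_derive_nonneg_at_right (fun t => f (- t)) (- x) (- l) (- a)).
  - lra.
  - replace (- l) with (scal (-1) l) by (unfold scal; simpl; unfold mult; simpl; ring).
    apply (is_derive_comp f Ropp); [now rewrite Ropp_involutive|].
    auto_derive; [exact I | ring].
  - now rewrite Ropp_involutive.
  - intros t Ht; apply Hpos; lra.
Qed.

Definition mixed_energy (y z : R -> R) (t : R) : R :=
  Derive y t * Derive z t + y t * z t * (3 + 3 / 2 * y t ^ 2 + 3 / 2 * z t ^ 2).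

Section Solution.

Variables y z : R -> R.
Hypothesis Hsol : is_solution y z.

Lemma solution_continuous_z t : continuous z t.
Proof. exact (ex_derive_continuous _ t (proj1 (proj2 (proj2 (Hsol t))))). Qed.

Lemma solution_derive_continuous t : continuous (Derive y) t.
Proof. exact (ex_derive_continuous _ t (proj1 (proj2 (Hsol t)))). Qed.

Lemma solution_second_derive_y t :
  Derive (Derive y) t = - y t * (3 + 3 / 2 * y t ^ 2 + 9 / 2 * z t ^ 2).
Proof. destruct (Hsol t) as [_ [_ [_ [_ [Ey _]]]]]; lra. Qed.

Lemma solution_second_derive_z t :
  Derive (Derive z) t = - z t * (9 + 9 / 2 * z t ^ 2 + 27 / 2 * y t ^ 2).
Proof. destruct (Hsol t) as [_ [_ [_ [_ [_ Ez]]]]]; lra. Qed.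

Lemma is_derive_mixed_energy t :
  is_derive (mixed_energy y z) t (- Derive y t * z t * (6 + 9 * y t ^ 2 + 3 * z t ^ 2)).
Proof.
  destruct (Hsol t) as [Dy [DDy [Dz [DDz _]]]].
  unfold mixed_energy; auto_derive.
  - repeat split; assumption.
  - rewrite solution_second_derive_y, solution_second_derive_z.
    change (fun x : R => y x) with y; change (fun x : R => z x) with z.
    field.
Qed.

Lemma critical_point_sign_at_right a t1 t2 :
  t1 < t2 -> critical_point y t1 ->
  (forall t, t1 < t < t2 -> 0 < a * Derive y t) -> a * y t1 <= 0.
Proof.
  intros Hlt Hcrit Hpos.
  assert (Hy2 : 0 <= a * Derive (Derive y) t1).
  { apply (is_derive_nonneg_at_right (fun t => a * Derive y t) t1 _ t2 Hlt); auto.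
    - apply is_derive_scal, Derive_correct, Hsol.
    - unfold critical_point in Hcrit; rewrite Hcrit; ring. }
  rewrite solution_second_derive_y in Hy2.
  nra.
Qed.

Lemma critical_point_sign_at_left a t1 t2 :
  t1 < t2 -> critical_point y t2 ->
  (forall t, t1 < t < t2 -> 0 < a * Derive y t) -> 0 <= a * y t2.
Proof.
  intros Hlt Hcrit Hpos.
  assert (Hy2 : a * Derive (Derive y) t2 <= 0).
  { apply (is_derive_nonpos_at_left (fun t => a * Derive y t) t1 t2 _ Hlt); auto.
    - apply is_derive_scal, Derive_correct, Hsol.
    - unfold critical_point in Hcrit; rewrite Hcrit; ring. }
  rewrite solution_second_derive_y in Hy2.
  nra.
Qed.

Lemma mixed_energy_decreasing a b t1 t2 :
  t1 < t2 ->
  (forall t, t1 < t < t2 -> 0 < a * Derive y t) ->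
  (forall t, t1 < t < t2 -> 0 < b * z t) ->
  a * b * mixed_energy y z t2 < a * b * mixed_energy y z t1.
Proof.
  intros Hlt Hy' Hz.
  destruct (MVT_cor2 (mixed_energy y z)
              (fun t => - Derive y t * z t * (6 + 9 * y t ^ 2 + 3 * z t ^ 2)) t1 t2 Hlt)
    as [c [Hmvt Hc]].
  { intros c _; apply is_derive_Reals, is_derive_mixed_energy. }
  specialize (Hy' c Hc); specialize (Hz c Hc).
  assert (Hprod : 0 < (a * Derive y c) * (b * z c) * (6 + 9 * y c ^ 2 + 3 * z c ^ 2)).
  { apply Rmult_lt_0_compat; [apply Rmult_lt_0_compat; assumption | nra]. }
  assert (E : a * b * (mixed_energy y z t2 - mixed_energy y z t1)
              = - ((a * Derive y c) * (b * z c) * (6 + 9 * y c ^ 2 + 3 * z c ^ 2)) * (t2 - t1))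
    by (rewrite Hmvt; ring).
  nra.
Qed.

Lemma mixed_energy_at_critical_points a b t1 t2 :
  consecutive_critical_points y t1 t2 ->
  (forall t, t1 < t < t2 -> 0 < a * Derive y t) ->
  (forall t, t1 < t < t2 -> 0 < b * z t) ->
  a * b * mixed_energy y z t1 <= 0 <= a * b * mixed_energy y z t2.
Proof.
  intros [Hlt [Hc1 [Hc2 _]]] Hy' Hz.
  pose proof (critical_point_sign_at_right a t1 t2 Hlt Hc1 Hy') as Hy1.
  pose proof (critical_point_sign_at_left a t1 t2 Hlt Hc2 Hy') as Hy2.
  assert (Hz1 : 0 <= b * z t1).
  { apply (continuous_nonneg_at_right (fun t => b * z t) t1 t2 Hlt); [|assumption].
    apply (continuous_scal_r b z), solution_continuous_z. }
  assert (Hz2 : 0 <= b * z t2).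
  { apply (continuous_nonneg_at_left (fun t => b * z t) t1 t2 Hlt); [|assumption].
    apply (continuous_scal_r b z), solution_continuous_z. }
  unfold mixed_energy, critical_point in *; rewrite Hc1, Hc2.
  assert (P1 : 0 < 3 + 3 / 2 * y t1 ^ 2 + 3 / 2 * z t1 ^ 2) by nra.
  assert (P2 : 0 < 3 + 3 / 2 * y t2 ^ 2 + 3 / 2 * z t2 ^ 2) by nra.
  assert (S1 : 0 <= - (a * y t1) * (b * z t1)) by (apply Rmult_le_pos; lra).
  assert (S2 : 0 <= (a * y t2) * (b * z t2)) by (apply Rmult_le_pos; lra).
  split; nra.
Qed.

End Solution.

Theorem proposition4p2 (y z : R -> R) (t1 t2 : R) :
  is_solution y z -> nontrivial y z ->
  consecutive_critical_points y t1 t2 ->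
  exists tau : R, t1 < tau < t2 /\ z tau = 0.
Proof.
  intros Hsol _ Hcrit.
  destruct (classic (exists tau, t1 < tau < t2 /\ z tau = 0)) as [|Hno]; [assumption|].
  exfalso.
  assert (Hlt : t1 < t2) by apply Hcrit.
  destruct (continuous_nonvanishing_sign (Derive y) t1 t2) as [a Ha]; auto.
  { exact (solution_derive_continuous y z Hsol). }
  { apply Hcrit. }
  destruct (continuous_nonvanishing_sign z t1 t2) as [b Hb]; auto.
  { intro t; exact (solution_continuous_z y z Hsol t). }
  { intros t Ht Hzt; apply Hno; exists t; auto. }
  pose proof (mixed_energy_decreasing y z Hsol a b t1 t2 Hlt Ha Hb).
  pose proof (mixed_energy_at_critical_points y z Hsol a b t1 t2 Hcrit Ha Hb).
  lra.
Qed.
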